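(* Let $X$ be a real reflexive Banach space and $f:X\to\mathbb{R}\cup\{+\infty\}$ a lower semicontinuous proper convex function, and let $T=\partial f$. Then for every $\epsilon\ge0$ and $x\in X$, $\breve{T}_{\mathcal{F}_{\partial f}}(\tfrac{\epsilon}{2},x)\subset T^{\mathrm{SE}}(\epsilon,x)$.
   Context: $X^{\ast}$ is the dual of $X$ with pairing $\langle\cdot,\cdot\rangle$; $\partial f$ is the convex subdifferential of $f$. The dual of $X\times X^{\ast}$ is identified with $X^{\ast}\times X$ via $\langle (x,x^{\ast}),(y^{\ast},y)\rangle=\langle x,y^{\ast}\rangle+\langle y,x^{\ast}\rangle$; for $g:X\times X^{\ast}\to\mathbb{R}\cup\{+\infty\}$, $g^{\ast}(y^{\ast},y)=\sup_{(x,x^{\ast})}\{\langle x,y^{\ast}\rangle+\langle y,x^{\ast}\rangle-g(x,x^{\ast})\}$. The Fitzpatrick function of $T$ is $\mathcal{F}_T(x,x^{\ast})=\sup\{\langle y,x^{\ast}\rangle+\langle x-y,y^{\ast}\rangle:(y,y^{\ast})\in\mathrm{gph}(T)\}$. For $\eta\ge0$, $\partial_\eta g(z)$ is the set of $(y^{\ast},y)\in X^{\ast}\times X$ with $g(w,w^{\ast})\ge g(z)+\langle (w,w^{\ast})-z,(y^{\ast},y)\rangle-\eta$ for all $(w,w^{\ast})$ when $g(z)<\infty$, and $\emptyset$ otherwise; $\breve{T}_g(\epsilon,x):=\{x^{\ast}:(x^{\ast},x)\in\partial_{2\epsilon}g(x,x^{\ast})\}$. The smallest enlargement of $T$ is $T^{\mathrm{SE}}(\epsilon,x):=\{x^{\ast}:\mathcal{F}_T^{\ast}(x^{\ast},x)\le\langle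 x,x^{\ast}\rangle+\epsilon\}$. *)

From HB Require Import structures.
From mathcomp Require Import all_boot all_order all_algebra.
From mathcomp Require Import all_classical all_reals all_analysis.
Set Implicit Arguments. Unset Strict Implicit. Unset Printing Implicit Defensive.
Import Order.TTheory GRing.Theory Num.Theory.
Local Open Scope classical_set_scope.
Local Open Scope ring_scope.

Section Defs.
Context {R : realType} {X : normedModType R}.

Record dual := Dual {
  dfun :> X -> R;
  dlin : forall (a : R) (x y : X), dfun (a *: x + y) = a * dfun x + dfun y;
  dcont : continuous (dfun : X -> R^o) }.

(* A functional
   phi on X^* is bounded iff there is C with |phi x*| <= C * M whenever
   |x* x| <= M * ||x|| for all x. *)
Definition reflexive_space : Prop :=
  forall phi : dual -> R,
    (forall (a : R) (u v w : dual), (forall x, w x = a * u x + v x) ->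
        phi w = a * phi u + phi v) ->
    (exists C : R, forall (u : dual) (M : R), 0 <= M ->
        (forall x, `|u x| <= M * `|x|) -> `|phi u| <= C * M) ->
    exists x : X, forall u : dual, phi u = u x.

Local Open Scope ereal_scope.

Definition proper_fun (f : X -> \bar R) : Prop :=
  (forall x, f x != -oo) /\ (exists x, f x != +oo).

Definition convex_fun (f : X -> \bar R) : Prop :=
  forall (x y : X) (t : R), (0 < t < 1)%R ->
    f (t *: x + (1 - t) *: y)%R <= t%:E * f x + (1 - t)%:E * f y.

Definition subdiff (f : X -> \bar R) (x : X) : set dual :=
  [set u | f x \is a fin_num /\ forall y, f x + (u y - u x)%:E <= f y].

Definition fitzpatrick (T : X -> set dual) (p : X * dual) : \bar R :=
  ereal_sup [set r | exists y : X, exists v : dual,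
    T y v /\ r = ((p.2 y) + (v p.1 - v y))%:E].

Definition pairing (p : X * dual) (q : dual * X) : R := q.1 p.1 + p.2 q.2.

Definition conjugate (g : X * dual -> \bar R) (q : dual * X) : \bar R :=
  ereal_sup [set (pairing p q)%:E - g p | p in [set: X * dual]].

Definition eps_subdiff (g : X * dual -> \bar R) (eta : R) (z : X * dual)
  : set (dual * X) :=
  [set q | g z < +oo /\ forall w : X * dual,
     g z + (pairing w q - pairing z q)%:E - eta%:E <= g w].

Definition Tbreve (g : X * dual -> \bar R) (eps : R) (x : X) : set dual :=
  [set u | eps_subdiff g (2 * eps) (x, u) (u, x)].

Definition TSE (T : X -> set dual) (eps : R) (x : X) : set dual :=
  [set u | conjugate (fitzpatrick T) (u, x) <= (u x + eps)%:E].

End Defs.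
Arguments dual {R} X.

(* Since (u, x) is an eps-subgradient of F := F_{df} at (x, u),
   F^*(u, x) <= 2 <x, u> + eps - F(x, u); it therefore suffices that
   F(x, u) >= <x, u>, i.e. that some (y, v) in the graph of df satisfies
   <y - x, u - v> >= 0.  This is Rockafellar's argument: Ekeland's principle
   gives a point y at which f plus the convex Lipschitz penalty
   M ||. - x|| - u + ||. - y|| is minimal (M dominating the slopes of u and
   of a cone minorant of f), and a Hahn-Banach sandwich between f and the
   penalty yields v in df(y) with <y - x, u - v> >= (M - 1) ||y - x||. *)

From Pilot Require Import Defs.
From HB Require Import structures.
From mathcomp Require Import all_boot all_order all_algebra.
From mathcomp Require Import all_classical all_reals all_analysis.
From mathcomp Require Import ring lra.
Import Order.TTheory GRing.Theory Num.Theory.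
Set Implicit Arguments. Unset Strict Implicit. Unset Printing Implicit Defensive.
Local Open Scope classical_set_scope.
Local Open Scope ring_scope.

Lemma not_fin_numNy (R : realType) (x : \bar R) :
  x != -oo%E -> x \isn't a fin_num -> x = +oo%E.
Proof. by case: x. Qed.

Lemma lte_EFin_dense (R : realType) (a : R) (x : \bar R) : (a%:E < x)%E ->
  exists2 c : R, a < c & (c%:E < x)%E.
Proof.
case: x => [r| |] //= ar; last by exists (a + 1); [lra | exact: ltry].
by exists ((a + r) / 2); rewrite ?lte_fin; move: ar; rewrite lte_fin; lra.
Qed.

Lemma lee_conv_addr (R : realType) (F F1 F2 : \bar R) (r t : R) :
  (F <= t%:E * F1 + (1 - t)%:E * F2)%E ->
  (F + r%:E <= t%:E * (F1 + r%:E) + (1 - t)%:E * (F2 + r%:E))%E.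
Proof.
move=> /(leeD2r r%:E); rewrite !muleDr ?fin_num_adde_defl // -!EFinM addeACA.
by rewrite -EFinD -mulrDl [t + _]addrC subrK mul1r.
Qed.

Definition lform (R : pzRingType) (V : lmodType R) (w : V -> R) :=
  forall a x y, w (a *: x + y) = a * w x + w y.

Definition convex_rfun (R : realType) (V : lmodType R) (g : V -> R) :=
  forall x y (t : R), 0 < t < 1 ->
    g (t *: x + (1 - t) *: y) <= t * g x + (1 - t) * g y.

Section LinearForm.
Variables (R : pzRingType) (V : lmodType R) (w : V -> R).
Hypothesis wlin : lform w.

Lemma lform0 : w 0 = 0.
Proof.
by move: (wlin 1 0 0); rewrite scale1r addr0 mul1r -{1}[w 0]addr0 => /addrI.
Qed.

Lemma lformD x y : w (x + y) = w x + w y.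
Proof. by rewrite -{1}[x]scale1r wlin mul1r. Qed.

Lemma lformZ a x : w (a *: x) = a * w x.
Proof. by rewrite -[a *: x]addr0 wlin lform0 addr0. Qed.

Lemma lformN x : w (- x) = - w x.
Proof. by rewrite -scaleN1r lformZ mulN1r. Qed.

Lemma lformB x y : w (x - y) = w x - w y.
Proof. by rewrite lformD lformN. Qed.

End LinearForm.

Lemma lform_opp (R : pzRingType) (V : lmodType R) (w : V -> R) :
  lform w -> lform (fun x => - w x).
Proof. by move=> wlin a x y; rewrite wlin opprD mulrN. Qed.

Lemma dual_lform (R : realType) (X : normedModType R) (u : dual X) : lform u.
Proof. exact: Defs.dlin. Qed.

Lemma dual_bounded (R : realType) (X : normedModType R) (u : dual X) :
  exists2 K, 0 < K & forall z, `|u z| <= K * `|z|.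
Proof.
have /cvgrPdist_lt /(_ 1 ltr01) /nbhs_ballP [d /= d0 ball_lt] := @dcont _ _ u 0.
exists (2 / d) => [|z]; first by rewrite divr_gt0.
have [->|z0] := eqVneq z 0; first by rewrite (lform0 (dual_lform u)) !normr0 mulr0.
have zn0 : 0 < `|z| by rewrite normr_gt0.
have s0 : 0 < d / (2 * `|z|) by rewrite divr_gt0 ?mulr_gt0.
have : ball (0 : X) d ((d / (2 * `|z|)) *: z).
  rewrite -ball_normE /= sub0r normrN normrZ gtr0_norm //.
  have -> : d / (2 * `|z|) * `|z| = d / 2 by field; rewrite lt0r_neq0.
  lra.
move=> /ball_lt /=; rewrite (lform0 (dual_lform u)) sub0r normrN.
rewrite (lformZ (dual_lform u)) normrM gtr0_norm // mulrAC ltr_pdivrMr ?mulr_gt0 //.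
by rewrite mul1r mulrAC ler_pdivlMr // mulrC => /ltW.
Qed.

Section ConvexRealFunctions.
Variables (R : realType) (V : normedModType R).

Lemma convex_rfunD (g1 g2 : V -> R) :
  convex_rfun g1 -> convex_rfun g2 -> convex_rfun (g1 \+ g2).
Proof.
by move=> g1c g2c x y t t01; have := g1c x y t t01; have := g2c x y t t01; rewrite /=; lra.
Qed.

Lemma convex_rfunZ (M : R) (g : V -> R) : 0 <= M -> convex_rfun g ->
  convex_rfun (fun y => M * g y).
Proof.
by move=> M0 gc x y t t01; have := ler_wpM2l M0 (gc x y t t01); nra.
Qed.

Lemma convex_rfun_lform (w : V -> R) : lform w -> convex_rfun w.
Proof. by move=> wlin x y t _; rewrite wlin !(lformZ wlin). Qed.

Lemma convex_rfun_dist (a : V) : convex_rfun (fun y => `|y - a|).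
Proof.
move=> x y t /andP[t0 t1]; have t1' : 0 < 1 - t by rewrite subr_gt0.
have -> : t *: x + (1 - t) *: y - a = t *: (x - a) + (1 - t) *: (y - a).
  by rewrite !scalerBr addrACA -opprD -scalerDl [t + _]addrC subrK scale1r.
by apply: le_trans (ler_normD _ _) _; rewrite !normrZ !gtr0_norm.
Qed.

End ConvexRealFunctions.

Lemma klipschitzP (R : numFieldType) (V W : normedModType R) (k : R) (g : V -> W) :
  k.-lipschitz g <-> forall x y, `|g x - g y| <= k * `|x - y|.
Proof. by split=> [gk x y|gk [x y] _]; [exact: (gk (x, y)) | exact: gk]. Qed.
Arguments klipschitzP {R V W k g}.

Section Continuity.
Variables (R : realType) (V W : normedModType R).

Lemma klipschitz_continuous (k : R) (g : V -> W) : k.-lipschitz g -> continuous g.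
Proof.
move=> /klipschitzP gk x; apply/cvgrPdist_lt => e e0; apply/nbhs_ballP.
have k1_gt0 : 0 < `|k| + 1 by rewrite ltr_wpDl.
exists (e / (`|k| + 1)); first by rewrite /= divr_gt0.
move=> y; rewrite -ball_normE /= ltr_pdivlMr // => xy_lt.
apply: le_lt_trans (gk x y) _; apply: le_lt_trans (ler_wpM2r (normr_ge0 _) (ler_norm k)) _.
by have := normr_ge0 (x - y); nra.
Qed.

End Continuity.

Lemma klipschitzD (R : realType) (V W : normedModType R) (k1 k2 : R) (g1 g2 : V -> W) :
  k1.-lipschitz g1 -> k2.-lipschitz g2 -> (k1 + k2).-lipschitz (g1 \+ g2).
Proof.
move=> /klipschitzP g1k /klipschitzP g2k; apply/klipschitzP => x y /=.
by rewrite opprD addrACA mulrDl (le_trans (ler_normD _ _)) // lerD.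
Qed.

Lemma klipschitzZ (R : realType) (V : normedModType R) (c k : R) (g : V -> R) :
  0 <= c -> k.-lipschitz g -> (c * k).-lipschitz (fun z => c * g z).
Proof.
move=> c0 /klipschitzP gk; apply/klipschitzP => x y.
by rewrite -mulrBr normrM ger0_norm // -mulrA ler_wpM2l.
Qed.

Lemma dist_klipschitz (R : realType) (V : normedModType R) (y : V) :
  1.-lipschitz (fun z => `|z - y|).
Proof.
apply/klipschitzP => z w; rewrite mul1r (le_trans (ler_dist_dist _ _)) //.
by rewrite opprB addrA subrK.
Qed.

Lemma lform_klipschitz (R : realType) (V : normedModType R) (w : V -> R) (K : R) :
  lform w -> (forall x, `|w x| <= K * `|x|) -> K.-lipschitz w.
Proof. by move=> wlin wK; apply/klipschitzP => x y; rewrite -(lformB wlin). Qed.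

Lemma lform_bounded_continuous (R : realType) (V : normedModType R) (w : V -> R) (K : R) :
  lform w -> (forall x, `|w x| <= K * `|x|) -> continuous (w : V -> R^o).
Proof. by move=> wlin /(lform_klipschitz wlin) /klipschitz_continuous. Qed.

Section HahnBanach.
Variables (R : realType) (V : lmodType R) (h : V -> R).
Hypotheses (hconv : convex_rfun h) (h0 : 0 <= h 0).

Definition dominated_graph (A : set (V * R)) :=
  [/\ forall a d r d' r', A (d, r) -> A (d', r') -> A (a *: d + d', a * r + r'),
      forall d r r', A (d, r) -> A (d, r') -> r = r' &
      forall d r, A (d, r) -> r <= h d].

Lemma dominated_graph_bigcup (F : set (set (V * R))) :
  F `<=` dominated_graph -> total_on F subset ->
  dominated_graph (\bigcup_(A in F) A).
Proof.
move=> Fdom Ftot; split.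
- move=> a d r d' r' [A1 F1 A1dr] [A2 F2 A2dr].
  have [A12|A21] := Ftot _ _ F1 F2.
  + by have [lin _ _] := Fdom _ F2; exists A2 => //; apply: lin (A12 _ A1dr) A2dr.
  + by have [lin _ _] := Fdom _ F1; exists A1 => //; apply: lin A1dr (A21 _ A2dr).
- move=> d r r' [A1 F1 A1dr] [A2 F2 A2dr].
  have [A12|A21] := Ftot _ _ F1 F2.
  + by have [_ fun_A _] := Fdom _ F2; apply: fun_A (A12 _ A1dr) A2dr.
  + by have [_ fun_A _] := Fdom _ F1; apply: fun_A A1dr (A21 _ A2dr).
- by move=> d r [A FA Adr]; have [_ _ dom] := Fdom _ FA; apply: dom.
Qed.

Lemma dominated_graph0 : dominated_graph [set (0, 0)].
Proof.
split.
- by move=> a d r d' r' [-> ->] [-> ->]; rewrite scaler0 addr0 mulr0 addr0.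
- by move=> d r r' [_ ->] [_ ->].
- by move=> d r [-> ->].
Qed.

Lemma dominated_graph_origin A p : dominated_graph A -> A p -> A (0, 0).
Proof.
move: p => [d r] [lin _ _] Adr.
by have := lin (-1) d r d r Adr Adr; rewrite scaleN1r mulN1r !addNr.
Qed.

Section Adjoin.
Variables (A : set (V * R)) (d0 : V).
Hypotheses (Adom : dominated_graph A) (A0 : A (0, 0)).
Hypothesis d0_notin : ~ exists r, A (d0, r).

(* Convexity of [h] separates the admissible values at [d0] from below and above. *)
Lemma dominated_graph_gap d1 r1 d2 r2 (a b : R) :
  A (d1, r1) -> A (d2, r2) -> 0 < a -> 0 < b ->
  a * r1 + b * r2 <= a * h (d1 - b *: d0) + b * h (d2 + a *: d0).
Proof.
move=> A1 A2 a0 b0; have [lin _ dom] := Adom.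
have ab0 : 0 < a + b by rewrite addr_gt0.
pose t := a / (a + b).
have t01 : 0 < t < 1 by rewrite divr_gt0 //= ltr_pdivrMr // mul1r ltrDl.
have t1E : 1 - t = b / (a + b) by rewrite /t; field; rewrite lt0r_neq0.
have Amid : A (t *: d1 + (1 - t) *: d2, t * r1 + (1 - t) * r2).
  by apply: (lin) A1 _; have := lin (1 - t) d2 r2 0 0 A2 A0; rewrite !addr0.
have midE : t *: d1 + (1 - t) *: d2 = t *: (d1 - b *: d0) + (1 - t) *: (d2 + a *: d0).
  have tbE : t * b = (1 - t) * a by rewrite t1E /t; field; rewrite lt0r_neq0.
  by rewrite !scalerDr !scalerN !scalerA tbE addrACA addNr addr0.
rewrite midE in Amid; have := le_trans (dom _ _ Amid) (hconv _ _ t01).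
have scaleE x y : t * x + (1 - t) * y = (a * x + b * y) / (a + b).
  by rewrite t1E /t; field; rewrite lt0r_neq0.
by rewrite !scaleE ler_pM2r ?invr_gt0.
Qed.

Definition adjoin_graph (c : R) : set (V * R) :=
  [set p | exists d r a, A (d, r) /\ p = (d + a *: d0, r + a * c)].

Lemma dominated_adjoin_graph c :
  (forall d r a, A (d, r) -> 0 < a -> r - a * c <= h (d - a *: d0)) ->
  (forall d r a, A (d, r) -> 0 < a -> r + a * c <= h (d + a *: d0)) ->
  dominated_graph (adjoin_graph c).
Proof.
move=> c_lo c_up; have [lin fun_A dom] := Adom; split.
- move=> a _ _ _ _ [d1 [r1 [a1 [A1 [-> ->]]]]] [d2 [r2 [a2 [A2 [-> ->]]]]].
  exists (a *: d1 + d2), (a * r1 + r2), (a * a1 + a2); split; first exact: lin.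
  by congr (_, _); [rewrite scalerDr scalerA scalerDl addrACA | ring].
- move=> d r r' [d1 [r1 [a1 [A1 [E1 ->]]]]] [d2 [r2 [a2 [A2 [E2 ->]]]]].
  have [a12|a12] := eqVneq a1 a2.
    have d12 : d1 = d2 by apply: (addIr (a1 *: d0)); rewrite -E1 E2 a12.
    by rewrite -d12 in A2; rewrite (fun_A _ _ _ A1 A2) a12.
  exfalso; apply: d0_notin; exists ((r2 - r1) / (a1 - a2)).
  have A21 : A (d2 - d1, r2 - r1).
    by have := lin (-1) _ _ _ _ A1 A2; rewrite scaleN1r mulN1r addrC [- r1 + _]addrC.
  have d21E : d2 - d1 = (a1 - a2) *: d0.
    by rewrite scalerBl -[d2](addrK (a2 *: d0)) -E2 E1 addrAC [d1 + _]addrC addrK.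
  have := lin ((a1 - a2)^-1) _ _ 0 0 A21 A0.
  by rewrite d21E scalerA mulVf ?subr_eq0 // scale1r !addr0 mulrC.
- move=> _ _ [d [r [a [Adr [-> ->]]]]].
  have [a0|a0|->] := ltgtP a 0.
  + by have := c_lo d r (- a) Adr; rewrite oppr_gt0 scaleNr opprK mulNr opprK; apply.
  + exact: c_up.
  + by rewrite scale0r mul0r !addr0; exact: dom.
Qed.

Lemma adjoin_graph_proper c : A `<` adjoin_graph c.
Proof.
split; first by move=> [d r] Adr; exists d, r, 0; rewrite scale0r mul0r !addr0.
move=> /(_ (d0, c)) Ad0; apply: d0_notin; exists c; apply: Ad0.
by exists 0, 0, 1; rewrite scale1r mul1r !add0r.
Qed.

Lemma dominated_graph_extend : exists B, dominated_graph B /\ A `<` B.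
Proof.
pose lo := [set l | exists d r b, [/\ A (d, r), 0 < b & l = (r - h (d - b *: d0)) / b]].
have lo_up l d r a : lo l -> A (d, r) -> 0 < a -> l <= (h (d + a *: d0) - r) / a.
  move=> [d1 [r1 [b [A1 b0 ->]]]] Adr a0.
  rewrite ler_pdivlMr // mulrAC ler_pdivrMr //.
  have := dominated_graph_gap A1 Adr a0 b0; nra.
have lo0 : lo (- h (- d0)) by exists 0, 0, 1; rewrite scale1r divr1 !sub0r.
have lo_ub : has_ubound lo.
  by exists (h d0) => l /lo_up /(_ A0 ltr01); rewrite add0r scale1r subr0 divr1.
exists (adjoin_graph (sup lo)); split; last exact: adjoin_graph_proper.
apply: dominated_adjoin_graph => d r a Adr a0.
- have : (r - h (d - a *: d0)) / a <= sup lo by apply: ub_le_sup => //; exists d, r, a.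
  rewrite ler_pdivrMr //; nra.
- have : sup lo <= (h (d + a *: d0) - r) / a.
    by apply: ge_sup; [exists (- h (- d0)) | move=> l /lo_up; apply].
  rewrite ler_pdivlMr //; nra.
Qed.

End Adjoin.

Theorem convex_dominated_lform : exists w : V -> R, lform w /\ forall x, w x <= h x.
Proof.
have [A [Adom Amax]] := Zorn_bigcup dominated_graph_bigcup.
have A0 : A (0, 0).
  apply: contrapT => nA0; apply: (Amax [set (0, 0)]) dominated_graph0.
  split=> [p Ap|/(_ (0, 0) erefl)/nA0//].
  by case: nA0; exact: dominated_graph_origin Adom Ap.
have Atot d : exists r, A (d, r).
  apply: contrapT => nAd.
  by have [B [Bdom AB]] := dominated_graph_extend Adom A0 nAd; exact: Amax AB Bdom.
pose w d := xget 0 [set r | A (d, r)].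
have Aw d : A (d, w d) by exact: (xgetPex 0 (Atot d)).
have [lin fun_A dom] := Adom.
by exists w; split=> [a x y|x]; [apply: fun_A _ _ _ (Aw _) _; apply: lin | apply: dom].
Qed.
End HahnBanach.

Section Sandwich.
Variables (R : realType) (X : normedModType R).
Variables (psi : X -> \bar R) (U : X -> R) (L : R).
Hypotheses (psi_conv : convex_fun psi) (psi0 : psi 0 = 0%E).
Hypotheses (U_conv : convex_rfun U) (U0 : U 0 = 0) (U_lip : L.-lipschitz U).
Hypothesis psi_ge : forall d, ((- U (- d))%:E <= psi d)%E.

Let conv_vals d := [set fine (psi e) + U (d - e) | e in [set e | psi e \is a fin_num]].

(* The infimal convolution of [psi] and [U], a convex function squeezed between them. *)
Let h d := inf (conv_vals d).

Let conv_vals_U d : conv_vals d (U d).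
Proof. by exists 0; rewrite /= psi0 // add0r subr0. Qed.

Let conv_vals_lb d : has_lbound (conv_vals d).
Proof.
exists (- (L * `|d|)) => _ [e /= fe <-].
have psi_e : - U (- e) <= fine (psi e) by rewrite -lee_fin fineK.
have := ler_norm (U (- e) - U (d - e)); have := klipschitzP.1 U_lip (- e) (d - e).
by rewrite /= opprB addKr normrN; lra.
Qed.

Let h_le d e : psi e \is a fin_num -> h d <= fine (psi e) + U (d - e).
Proof. by move=> fe; apply: ge_inf => //; exists e. Qed.

Let h_le_U d : h d <= U d.
Proof. by have := h_le d (e:=0); rewrite psi0 subr0 /= add0r; apply. Qed.

Let h_le_psi d : ((h d)%:E <= psi d)%E.
Proof.
have [fd|] := boolP (psi d \is a fin_num).
  by rewrite -(fineK fd) lee_fin; have := h_le d fd; rewrite subrr U0 addr0.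
rewrite fin_numE negb_and !negbK => /orP[/eqP psi_d|/eqP ->]; last exact: leey.
by have := psi_ge d; rewrite psi_d leeNy_eq.
Qed.

Let h0_ge0 : 0 <= h 0.
Proof.
apply: lb_le_inf; first by exists (U 0); exact: conv_vals_U.
move=> _ [e /= fe <-]; rewrite sub0r.
by have := psi_ge e; rewrite -(fineK fe) lee_fin; lra.
Qed.

Let h_conv_vals x y t e1 e2 : 0 < t < 1 ->
  psi e1 \is a fin_num -> psi e2 \is a fin_num ->
  h (t *: x + (1 - t) *: y) <=
    t * (fine (psi e1) + U (x - e1)) + (1 - t) * (fine (psi e2) + U (y - e2)).
Proof.
move=> t01 f1 f2; set e := t *: e1 + (1 - t) *: e2.
have psi_e := psi_conv e1 e2 t01.
have fe : psi e \is a fin_num.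
  rewrite fin_numE; apply/andP; split.
    by apply/eqP => psi_e_oo; have := psi_ge e; rewrite psi_e_oo leeNy_eq.
  apply/eqP => psi_e_oo; move: psi_e.
  by rewrite psi_e_oo -(fineK f1) -(fineK f2) -!EFinM -EFinD leye_eq.
have {}psi_e : fine (psi e) <= t * fine (psi e1) + (1 - t) * fine (psi e2).
  by rewrite -lee_fin fineK // EFinD !EFinM !fineK.
have zeE : t *: x + (1 - t) *: y - e = t *: (x - e1) + (1 - t) *: (y - e2).
  by rewrite /e !scalerBr opprD addrACA.
have := h_le (t *: x + (1 - t) *: y) fe; rewrite zeE.
have := U_conv (x - e1) (y - e2) t01; nra.
Qed.

Let h_conv : convex_rfun h.
Proof.
move=> x y t t01; have /andP[t0 t1] := t01.
have t1' : 0 < 1 - t by rewrite subr_gt0.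
set z := t *: x + (1 - t) *: y.
have h_le_x e2 : psi e2 \is a fin_num ->
    h z <= t * h x + (1 - t) * (fine (psi e2) + U (y - e2)).
  move=> f2; suff : (h z - (1 - t) * (fine (psi e2) + U (y - e2))) / t <= h x.
    by rewrite ler_pdivrMr // => H; nra.
  apply: lb_le_inf; first by exists (U x); exact: conv_vals_U.
  move=> _ [e1 /= f1 <-]; rewrite ler_pdivrMr //.
  by have := h_conv_vals x y t01 f1 f2; nra.
suff : (h z - t * h x) / (1 - t) <= h y by rewrite ler_pdivrMr // => H; nra.
apply: lb_le_inf; first by exists (U y); exact: conv_vals_U.
move=> _ [e2 /= f2 <-]; rewrite ler_pdivrMr //; have := h_le_x e2 f2; nra.
Qed.

Theorem lform_sandwich : exists w : X -> R,
  [/\ lform w, forall d, ((w d)%:E <= psi d)%E & forall d, w d <= U d].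
Proof.
have [w [wlin w_le_h]] := convex_dominated_lform h_conv h0_ge0.
exists w; split => // d; last exact: le_trans (w_le_h d) (h_le_U d).
by apply: le_trans (h_le_psi d); rewrite lee_fin.
Qed.

End Sandwich.

Section LowerSemicontinuity.
Variables (R : realType) (T : topologicalType).

Lemma lower_semicontinuousD_continuous (phi : T -> \bar R) (g : T -> R) :
  lower_semicontinuous phi -> continuous (g : T -> R^o) ->
  lower_semicontinuous (fun z => phi z + (g z)%:E)%E.
Proof.
move=> phi_lsc g_cont x a.
have [->|phi_x] := eqVneq (phi x) -oo%E; first by rewrite /= ltNge leNye.
move=> a_lt; have [c ac c_lt] : exists2 c, a - g x < c & (c%:E < phi x)%E.
  apply: lte_EFin_dense; move: a_lt phi_x.
  by case: (phi x) => [r| |] //= + _; [rewrite -EFinD !lte_fin; lra | move=> _; exact: ltry].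
have [W Wx phi_gt] := phi_lsc x c c_lt.
have g_gt := cvgr_gt (g x) (g_cont x) (a - c) ltac:(lra).
exists (W `&` [set y | a - c < g y]); first exact: filterI.
move=> y [/phi_gt + /= g_y]; case: (phi y) => [r| |] // c_lt_y.
  by rewrite -EFinD lte_fin; move: c_lt_y; rewrite lte_fin; lra.
by rewrite addye ?ltry.
Qed.

Lemma closed_lower_semicontinuous_le (phi : T -> \bar R) (c : R) :
  lower_semicontinuous phi -> closed [set z | (phi z <= c%:E)%E].
Proof.
move=> /lower_semicontinuousP /(_ c) /open_closedC.
by congr closed; apply/seteqP; split=> z /=; rewrite leNgt => /negP.
Qed.

End LowerSemicontinuity.

Section Ekeland.
Variables (R : realType) (X : completeNormedModType R) (phi : X -> \bar R).
Variables (lam b : R) (y0 : X).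
Hypotheses (lam0 : 0 < lam) (phi_lsc : lower_semicontinuous phi).
Hypotheses (phi_ge : forall y, (b%:E <= phi y)%E) (phi_y0 : phi y0 \is a fin_num).

Let S y := [set z | (phi z + (lam * `|z - y|)%:E <= phi y)%E].

Let S_refl y : S y y.
Proof. by rewrite /S /= subrr normr0 mulr0 adde0. Qed.

Let S_fin y z : phi y \is a fin_num -> S y z -> phi z \is a fin_num.
Proof.
by rewrite /S /= !fin_numE; have := phi_ge z; case: (phi y); case: (phi z).
Qed.

Let S_trans y w z : S y w -> S w z -> S y z.
Proof.
move=> Sw Sz; have [fy|] := boolP (phi y \is a fin_num); last first.
  rewrite fin_numE negb_and !negbK => /orP[/eqP phi_y|/eqP phi_y].
    by have := phi_ge y; rewrite phi_y.
  by rewrite /S /= phi_y leey.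
have fw := S_fin fy Sw; have fz := S_fin fw Sz.
move: Sw Sz; rewrite /S /= -(fineK fy) -(fineK fw) -(fineK fz) -!EFinD !lee_fin.
have := ler_normD (z - w) (w - y); rewrite addrA subrK => /(ler_wpM2l (ltW lam0)).
by rewrite mulrDr; lra.
Qed.

Let S_closed y : phi y \is a fin_num -> closed (S y).
Proof.
move=> fy; rewrite /S -(fineK fy); apply: closed_lower_semicontinuous_le.
apply: lower_semicontinuousD_continuous => //.
exact: klipschitz_continuous (klipschitzZ (ltW lam0) (dist_klipschitz y)).
Qed.

Let vals y := [set fine (phi z) | z in S y].

Let vals_inf y : phi y \is a fin_num -> has_inf (vals y).
Proof.
move=> fy; split; first by exists (fine (phi y)), y.
by exists b => _ [z Sz <-]; rewrite -lee_fin fineK //; exact: S_fin Sz.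
Qed.

Let almost_min n y := [set z | S y z /\ fine (phi z) < inf (vals y) + n.+1%:R^-1].

Let next n y := xget y (almost_min n y).

Let nextP n y : phi y \is a fin_num -> almost_min n y (next n y).
Proof.
move=> fy; have ni : 0 < n.+1%:R^-1 :> R by rewrite invr_gt0.
have [_ [z Sz <-] z_lt] := inf_adherent ni (vals_inf fy).
by apply: (@xgetPex _ y (almost_min n y)); exists z.
Qed.

Fixpoint ekeland_seq n := if n is m.+1 then next m (ekeland_seq m) else y0.

Let seq_fin n : phi (ekeland_seq n) \is a fin_num.
Proof. by elim: n => // n IHn; exact: S_fin IHn (nextP n IHn).1. Qed.

Let seq_nest n m : (n <= m)%N -> S (ekeland_seq n) (ekeland_seq m).
Proof.
elim: m => [|m IHm]; first by rewrite leqn0 => /eqP ->.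
rewrite leq_eqVlt => /orP[/eqP ->//|]; rewrite ltnS => /IHm Snm.
exact: S_trans Snm (nextP m (seq_fin m)).1.
Qed.

Let seq_small n z : S (ekeland_seq n.+1) z ->
  lam * `|z - ekeland_seq n.+1| < n.+1%:R^-1.
Proof.
move=> Sz; have [Snext next_lt] := nextP n (seq_fin n).
have fz := S_fin (seq_fin n.+1) Sz.
have inf_le : inf (vals (ekeland_seq n)) <= fine (phi z).
  by apply: ge_inf; [exact: (vals_inf (seq_fin n)).2 | exists z => //; exact: S_trans Snext Sz].
move: Sz; rewrite /S /= -(fineK fz) -(fineK (seq_fin n.+1)) -EFinD lee_fin.
move: next_lt inf_le; rewrite -/(ekeland_seq n.+1); move: (n.+1%:R^-1) => e; lra.
Qed.

Let seq_cvg : cvg (ekeland_seq @ \oo).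
Proof.
apply: cauchy_cvg; apply: cauchy_exP => e e0.
have [N] := ltr_add_invr (mulr_gt0 lam0 e0); rewrite add0r => N_lt.
exists (ekeland_seq N.+1), N.+1 => // m /= Nm.
rewrite -ball_normE /= distrC -(ltr_pM2l lam0).
exact: lt_trans (seq_small (seq_nest Nm)) N_lt.
Qed.

Let seq_lim_in n : S (ekeland_seq n) (lim (ekeland_seq @ \oo)).
Proof.
apply: (closed_cvg _ (S_closed (seq_fin n))) seq_cvg.
by exists n => // m /= nm; exact: seq_nest.
Qed.

Theorem ekeland_principle : exists2 ys, phi ys \is a fin_num &
  forall y, (phi ys <= phi y + (lam * `|y - ys|)%:E)%E.
Proof.
set ys := lim (ekeland_seq @ \oo); exists ys; first exact: S_fin (seq_fin 0) (seq_lim_in 0).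
move=> z; have [Sz|] := pselect (S ys z); last first.
  by rewrite /S /= => /negP; rewrite -ltNge addeC => /ltW.
suff -> : z = ys by rewrite subrr normr0 mulr0 adde0.
apply/eqP; rewrite -subr_eq0 -normr_eq0; apply: contraT => zys.
have e0 : 0 < lam * `|z - ys| / 2 by rewrite divr_gt0 // mulr_gt0 // lt0r zys normr_ge0.
have [N] := ltr_add_invr e0; rewrite add0r => N_lt.
have z_near := seq_small (S_trans (seq_lim_in N.+1) Sz).
have ys_near := seq_small (seq_lim_in N.+1).
move: N_lt z_near ys_near; move: (N.+1%:R^-1) => e.
have := ler_normD (z - ekeland_seq N.+1) (ekeland_seq N.+1 - ys).
rewrite addrA subrK (distrC (ekeland_seq N.+1)) => /(ler_wpM2l (ltW lam0)).
rewrite mulrDr; lra.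
Qed.

End Ekeland.

Section ConeMinorant.
Variables (R : realType) (X : normedModType R) (f : X -> \bar R).
Hypotheses (f_lsc : lower_semicontinuous f) (f_proper : proper_fun f).
Hypothesis f_conv : convex_fun f.

(* [f > f z0 - 1] on a ball [B(z0, r)] by semicontinuity; convexity along
   the segment from [z0] propagates this bound outside the ball with slope [2 / r]. *)
Lemma convex_cone_minorant :
  exists z0 b K, 0 < K /\ forall y, ((b - K * `|y - z0|)%:E <= f y)%E.
Proof.
have [f_Ny [z0 fz0]] := f_proper.
have fz0_fin : f z0 \is a fin_num by rewrite fin_numE fz0 f_Ny.
set c := fine (f z0); have : ((c - 1)%:E < f z0)%E by rewrite -(fineK fz0_fin) lte_fin /c; lra.
move=> /f_lsc [W /nbhs_ballP [r /= r0 ball_W] W_gt].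
have ball_gt y : `|y - z0| < r -> ((c - 1)%:E < f y)%E.
  by move=> yr; apply/W_gt/ball_W; rewrite -ball_normE /= distrC.
exists z0, (c - 1), (2 / r); split => [|y]; first by rewrite divr_gt0.
have [fy_fin|/(not_fin_numNy (f_Ny y)) ->] := boolP (f y \is a fin_num); last exact: leey.
rewrite -(fineK fy_fin) lee_fin; set fy := fine (f y); set s := `|y - z0|.
have [sr|rs] := ltP s r.
  have := ball_gt y sr; rewrite -(fineK fy_fin) lte_fin -/fy.
  have : 0 <= 2 / r * s by rewrite mulr_ge0 ?divr_ge0 ?normr_ge0 // ltW.
  lra.
have s0 : 0 < s by apply: lt_le_trans rs.
set t := r / (2 * s); have t0 : 0 < t by rewrite divr_gt0 ?mulr_gt0.
have t01 : 0 < t < 1 by rewrite t0 /= /t ltr_pdivrMr ?mulr_gt0 // mul1r; lra.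
have t_inv : t * (2 / r * s) = 1 by rewrite /t; field; rewrite !lt0r_neq0.
have p_near : `|t *: y + (1 - t) *: z0 - z0| < r.
  rewrite scalerBl scale1r addrCA [z0 + _]addrC addrK -scalerBr normrZ gtr0_norm // -/s.
  have -> : t * s = r / 2 by rewrite /t; field; rewrite lt0r_neq0.
  lra.
have := lt_le_trans (ball_gt _ p_near) (f_conv y z0 t01).
rewrite -(fineK fy_fin) -(fineK fz0_fin) -!EFinM -EFinD lte_fin -/fy -/c.
have : 0 < 2 / r * s by rewrite mulr_gt0 ?divr_gt0.
nra.
Qed.

End ConeMinorant.

Section MinimumSubdiff.
Variables (R : realType) (X : normedModType R).
Variables (f : X -> \bar R) (g : X -> R) (L : R) (y0 : X).
Hypotheses (f_Ny : forall y, f y != -oo%E) (f_conv : convex_fun f).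
Hypotheses (g_conv : convex_rfun g) (g_lip : L.-lipschitz g).
Hypothesis f_y0 : f y0 \is a fin_num.
Hypothesis y0_min : forall y, (f y0 + (g y0)%:E <= f y + (g y)%:E)%E.

Let c0 := fine (f y0).
Let f_y0E : f y0 = c0%:E. Proof. by rewrite fineK. Qed.

(* Minimality of [y0] reads [- U (- d) <= psi d]; a linear form squeezed
   between them is a subgradient of [f] at [y0]. *)
Let psi d := (f (y0 + d)%R + (- c0)%:E)%E.
Let U d := g (y0 - d) - g y0.

Let psi_conv : convex_fun psi.
Proof.
move=> a c t t01; rewrite /psi.
have -> : y0 + (t *: a + (1 - t) *: c) = t *: (y0 + a) + (1 - t) *: (y0 + c).
  by rewrite !scalerDr addrACA -scalerDl [t + _]addrC subrK scale1r.
exact/lee_conv_addr/f_conv.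
Qed.

Let psi0 : psi 0 = 0%E.
Proof. by rewrite /psi addr0 f_y0E -EFinD subrr. Qed.

Let U_conv : convex_rfun U.
Proof.
move=> a c t t01; rewrite /U.
have -> : y0 - (t *: a + (1 - t) *: c) = t *: (y0 - a) + (1 - t) *: (y0 - c).
  by rewrite !scalerBr addrACA -opprD -scalerDl [t + _]addrC subrK scale1r.
by have := g_conv (y0 - a) (y0 - c) t01; lra.
Qed.

Let U0 : U 0 = 0.
Proof. by rewrite /U subr0 subrr. Qed.

Let U_lip : L.-lipschitz U.
Proof.
apply/klipschitzP => a c; rewrite /U opprB addrA subrK.
have := klipschitzP.1 g_lip (y0 - a) (y0 - c).
by rewrite opprB [y0 - a + _]addrC addrA subrK (distrC c).
Qed.

Let psi_ge d : ((- U (- d))%:E <= psi d)%E.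
Proof.
have := y0_min (y0 + d); rewrite /psi /U opprK.
have [fd|/(not_fin_numNy (f_Ny _)) ->] := boolP (f (y0 + d) \is a fin_num); last first.
  by rewrite addye ?leey.
rewrite -(fineK fd) f_y0E -!EFinD !lee_fin; lra.
Qed.

Theorem min_sum_subdiff : exists v : dual X,
  subdiff f y0 v /\ forall y, g y0 - v (y - y0) <= g y.
Proof.
have [w [wlin w_psi w_U]] := lform_sandwich psi_conv psi0 U_conv U0 U_lip psi_ge.
have w_le d : w d <= L * `|d|.
  apply: le_trans (w_U d) _; have := klipschitzP.1 U_lip d 0.
  by rewrite U0 !subr0; apply: le_trans (ler_norm _).
have w_bounded d : `|w d| <= L * `|d|.
  by rewrite ler_norml w_le andbT lerNl -(lformN wlin) -normrN w_le.
pose v := Dual wlin (lform_bounded_continuous wlin w_bounded).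
exists v; split => [|y]; last first.
  by have := w_U (y0 - y); rewrite /U subKr -[y0 - y]opprB (lformN wlin) /=; lra.
split=> // y; have := w_psi (y - y0); rewrite /psi subrKC /= (lformB wlin).
have [fy|/(not_fin_numNy (f_Ny _)) ->] := boolP (f y \is a fin_num); last first.
  by move=> _; exact: leey.
by rewrite -(fineK fy) f_y0E -!EFinD !lee_fin; lra.
Qed.

End MinimumSubdiff.

Section Penalty.
Variables (R : realType) (X : normedModType R) (u : dual X) (a : X) (M : R).
Hypothesis M0 : 0 <= M.

Definition penalty (y : X) : R := M * `|y - a| - u y.

Lemma penalty_convex : convex_rfun penalty.
Proof.
exact: convex_rfunD (convex_rfunZ M0 (convex_rfun_dist a))
  (convex_rfun_lform (lform_opp (dual_lform u))).
Qed.

Lemma penalty_klipschitz Ku : (forall z, `|u z| <= Ku * `|z|) ->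
  (M + Ku).-lipschitz penalty.
Proof.
move=> uK; rewrite -[M in M + Ku]mulr1.
apply: klipschitzD (klipschitzZ M0 (dist_klipschitz a)) _.
by apply: lform_klipschitz (lform_opp (dual_lform u)) _ => z; rewrite normrN.
Qed.

Lemma penalty_cone_ge (K Ku : R) (z0 y : X) : 0 <= K ->
  (forall z, `|u z| <= Ku * `|z|) -> K + Ku <= M ->
  - (K * `|a - z0|) - u a <= - (K * `|y - z0|) + penalty y.
Proof.
move=> K0 uK KM; rewrite /penalty.
have yz0 : `|y - z0| <= `|y - a| + `|a - z0|.
  by have := ler_normD (y - a) (a - z0); rewrite addrA subrK.
have uya : u y - u a <= Ku * `|y - a|.
  by rewrite -(lformB (dual_lform u)); apply: le_trans (ler_norm _) (uK _).
have := ler_wpM2l K0 yz0; have := ler_wpM2r (normr_ge0 (y - a)) KM; nra.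
Qed.

End Penalty.

Section FitzpatrickSubdiff.
Variables (R : realType) (X : completeNormedModType R) (f : X -> \bar R).
Hypotheses (f_lsc : lower_semicontinuous f) (f_proper : proper_fun f).
Hypothesis f_conv : convex_fun f.

(* Ekeland's principle for [f + penalty], with the penalty slope [M] beating
   the slopes of the cone minorant of [f] and of [u]. *)
Lemma ekeland_penalty_point (u : dual X) (x : X) : exists M, 1 <= M /\
  exists2 y0, f y0 \is a fin_num & forall y,
    (f y0 + (penalty u x M y0)%:E <= f y + (penalty u x M y + `|y - y0|)%:E)%E.
Proof.
have [z0 [b [K [K0 f_ge]]]] := convex_cone_minorant f_lsc f_proper f_conv.
have [Ku Ku0 uK] := dual_bounded u; have [f_Ny [z1 fz1]] := f_proper.
set M := K + Ku + 1; have M0 : 0 <= M by rewrite /M; lra.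
exists M; split; first by rewrite /M; lra.
pose phi y := (f y + (penalty u x M y)%:E)%E.
have phi_lsc : lower_semicontinuous phi.
  apply: lower_semicontinuousD_continuous => //.
  by apply: (@klipschitz_continuous _ _ _ (M + Ku)); apply: penalty_klipschitz.
have phi_ge y : ((b - K * `|x - z0| - u x)%:E <= phi y)%E.
  rewrite /phi; have [fy|/(not_fin_numNy (f_Ny y)) ->] := boolP (f y \is a fin_num).
    have := f_ge y; rewrite -(fineK fy) -EFinD !lee_fin.
    have KM : K + Ku <= M by rewrite /M; lra.
    by have := penalty_cone_ge x z0 y (ltW K0) uK KM; lra.
  by rewrite addye ?leey.
have phi_z1 : phi z1 \is a fin_num by rewrite /phi fin_numD fin_numE fz1 f_Ny.
have [y0 phi_y0 y0_min] := ekeland_principle ltr01 phi_lsc phi_ge phi_z1.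
have fy0 : f y0 \is a fin_num by move: phi_y0; rewrite /phi fin_numD => /andP[].
exists y0 => // y; rewrite (EFinD (penalty u x M y)) addeA.
by have := y0_min y; rewrite mul1r.
Qed.

Lemma fitzpatrick_subdiff_ge_pairing (x : X) (u : dual X) :
  ((u x)%:E <= fitzpatrick (subdiff f) (x, u))%E.
Proof.
have [M [M1 [y0 fy0 y0_min]]] := ekeland_penalty_point u x.
have [Ku _ uK] := dual_bounded u; have [f_Ny _] := f_proper.
have M0 : 0 <= M by lra.
pose g y := penalty u x M y + `|y - y0|.
have g_conv : convex_rfun g := convex_rfunD (penalty_convex u x M0) (convex_rfun_dist y0).
have g_lip : (M + Ku + 1).-lipschitz g :=
  klipschitzD (penalty_klipschitz x M0 uK) (dist_klipschitz y0).
have g_min y : (f y0 + (g y0)%:E <= f y + (g y)%:E)%E.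
  by rewrite /g subrr normr0 addr0; exact: y0_min.
have [v [v_sub v_g]] := min_sum_subdiff f_Ny f_conv g_conv g_lip fy0 g_min.
have F_ge : ((u y0 + (v x - v y0))%:E <= fitzpatrick (subdiff f) (x, u))%E.
  by apply: ereal_sup_ubound; exists y0, v.
apply: le_trans F_ge; rewrite lee_fin.
have := v_g x; rewrite /g /penalty !subrr !normr0 mulr0 sub0r addr0.
rewrite (lformB (dual_lform v)) distrC; have := ler_wpM2r (normr_ge0 (x - y0)) M1.
lra.
Qed.

End FitzpatrickSubdiff.

Unset Implicit Arguments.

Theorem proposition4p1 (R : realType) (X : completeNormedModType R)
  (f : X -> \bar R) :
  @reflexive_space R X ->
  lower_semicontinuous f -> proper_fun f -> convex_fun f ->
  forall (eps : R) (x : X), 0 <= eps ->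
    Tbreve (fitzpatrick (subdiff f)) (eps / 2) x `<=` TSE (subdiff f) eps x.
Proof.
move=> _ f_lsc f_proper f_conv eps x _ u [F_xu_lt u_sub].
set F := fitzpatrick (subdiff f).
have F_ge : ((u x)%:E <= F (x, u))%E :=
  fitzpatrick_subdiff_ge_pairing f_lsc f_proper f_conv x u.
have F_fin : F (x, u) \is a fin_num.
  by rewrite fin_numE -ltey F_xu_lt andbT; apply: contraTneq F_ge => ->.
apply: ge_ereal_sup => _ [[y v] _ <-]; have := u_sub (y, v).
move: F_ge; rewrite -/F -(fineK F_fin) /pairing /=.
case: (F (y, v)) => [s| |] /=; last by rewrite leeNy_eq.
- by rewrite !lee_fin; lra.
- by rewrite leNye.
Qed.
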